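(* For every word $w\in\mathcal{M}_n^e$: \[ Q_+w=\sum_{T\subseteq E^y_w}(-1)^{|T|}\psi^y_Tw,\qquad Q_+^{-1}w=\sum_{w'\le w}w', \] \[ Q_-w=\sum_{T\subseteq E^x_w}(-1)^{|T|}\psi^x_Tw,\qquad Q_-^{-1}w=\sum_{w'\ge w}w', \] where the sums over $w'$ range over words in $\mathcal{M}_n^e$. In particular $Q_\pm$ and their inverses have integer coefficients.
   Context: $\mathcal{M}_n^e$ is the set of words in letters $x,y$ with $n_x$ $x$'s and $n_y$ $y$'s, $n=n_x+n_y$, $e=n_y-n_x$; $\mathcal{F}_n^e$ is its free $\mathbb{Z}$-span. Partial order: $w_0\le w_1$ iff for each $i$ the $i$-th $x$ of $w_0$ is at a position $\le$ that of the $i$-th $x$ of $w_1$. Bilinear form $\langle w_0|w_1\rangle=1$ if $w_0\le w_1$, else $0$; dot form $w_0\cdot w_1=1$ if $w_0=w_1$, else $0$. $Q_+,Q_-$ are the linear maps on $\mathcal{F}_n^e\otimes\mathbb{Q}$ with $u\cdot v=\langle u|Q_+v\rangle=\langle Q_-u|v\rangle$ for all $u,v$. $E^x_w$ is the set of occurrences of $x$ in $w$ immediately followed by a $y$; for $T\subseteq E^x_w$, $\psi^x_Tw$ replaces, for each $x\in T$, that $x$ and its following $y$ ($xy$) by $yx$. Similarly $E^y_w$ is the set of $y$'s immediately followed by an $x$, and $\psi^y_Tw$ replaces each such $yx$ ($y\in T$) by $xy$. *)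

From HB Require Import structures.
From mathcomp Require Import all_boot all_order all_algebra.
Set Implicit Arguments. Unset Strict Implicit. Unset Printing Implicit Defensive.
Import Order.TTheory GRing.Theory Num.Theory.
Local Open Scope ring_scope.

Definition lx : bool := false.
Definition ly : bool := true.

Definition word (n : nat) := n.-tuple bool.

Definition inM (e : int) {n : nat} (w : word n) : bool :=
  ((count (pred1 ly) w)%:Z - (count (pred1 lx) w)%:Z == e).

Definition Mne (n : nat) (e : int) : finType := {w : word n | inM e w}.

Definition xpos {n : nat} (w : word n) : seq nat :=
  [seq i <- iota 0 n | nth ly w i == lx].

(* Partial order: the i-th x of w0 is at a position <= that of the i-th x of w1
   (for every i; words of M_n^e have the same number of x's). *)
Definition leW {n : nat} (w0 w1 : word n) : bool :=
  all2 (fun p q => (p <= q)%N) (xpos w0) (xpos w1).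

(* F_n^e (x) Q : rational vectors indexed by M_n^e. *)
Definition vec (n : nat) (e : int) := {ffun Mne n e -> rat}.

(* The vector of F_n^e (x) Q given by a word t (t is meant to lie in M_n^e). *)
Definition bvec {n : nat} {e : int} (t : word n) : vec n e :=
  [ffun w' : Mne n e => ((val w' == t) : nat)%:R].

Definition dotf {n : nat} {e : int} (u v : vec n e) : rat :=
  \sum_(w : Mne n e) u w * v w.

Definition bilf {n : nat} {e : int} (u v : vec n e) : rat :=
  \sum_(w0 : Mne n e) \sum_(w1 : Mne n e)
     u w0 * v w1 * ((leW (val w0) (val w1) : nat)%:R).

Definition scv {n : nat} {e : int} (a : rat) (u : vec n e) : vec n e :=
  [ffun w => a * u w].

Definition is_linear {n : nat} {e : int} (Q : vec n e -> vec n e) : Prop :=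
  forall (a : rat) (u v : vec n e), Q (scv a u + v) = scv a (Q u) + Q v.

Definition Ex {n : nat} (w : word n) : {set 'I_n} :=
  [set i : 'I_n | (nth ly w i == lx) && (i.+1 < n)%N && (nth lx w i.+1 == ly)].

Definition Ey {n : nat} (w : word n) : {set 'I_n} :=
  [set i : 'I_n | (nth lx w i == ly) && (i.+1 < n)%N && (nth ly w i.+1 == lx)].

(* Replace, for each i in T, the two letters at positions i, i+1 by [b; ~~ b]
   (pairs at positions in T are disjoint when T is a subset of E^x_w or E^y_w). *)
Definition swapT {n : nat} (b : bool) (T : {set 'I_n}) (w : word n) : word n :=
  [tuple (if [exists i in T, (j : nat) == i] then b
          else if [exists i in T, (j : nat) == (i : nat).+1] then ~~ b
          else tnth w j) | j < n].

Definition psix {n : nat} (T : {set 'I_n}) (w : word n) : word n := swapT ly T w.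
Definition psiy {n : nat} (T : {set 'I_n}) (w : word n) : word n := swapT lx T w.

From HB Require Import structures.
From mathcomp Require Import all_boot all_order all_algebra zify.
Set Implicit Arguments. Unset Strict Implicit. Unset Printing Implicit Defensive.
Import Order.TTheory GRing.Theory Num.Theory.

(* Read a word through the prefix counts of one of its letters.  For words of
   M_n^e, w0 <= w1 means that every prefix of w0 contains at least as many x's
   as the same prefix of w1, and psi^y_T b (T in E^y_b) has one more x than b
   exactly in the prefixes that end in the middle of a pair of T.  So a <=
   psi^y_T b iff a <= b and every pair of T lies in the set G of pairs of E^y_b
   in whose middle a has strictly more x's than b; the alternating sum over T
   is then [a <= b][G empty], and a <= b with G empty forces a = b.  Thus the
   psi^y-sums form a right inverse of the zeta matrix of <=.  The same argument
   for the letter y, whose prefix order is the reverse one, makes the psi^x-sums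
   a right inverse of the transposed zeta matrix.  Hence zeta is invertible, and
   Q_+ and Q_- are the inverses of zeta and of its transpose. *)

Lemma sum_subset_sign (I : finType) (R : pzRingType) (S : {set I}) :
  (\sum_(T : {set I} | T \subset S) (-1 : R) ^+ #|T| = (S == set0)%:R)%R.
Proof.
have [->|[s sS]] := set_0Vmem S.
  by rewrite eqxx (big_pred1 set0) ?cards0 // => T; rewrite subset0.
have /negbTE -> : S != set0 by apply/set0Pn; exists s.
rewrite (bigID (fun T : {set I} => s \in T)) /=.
rewrite (reindex_onto (fun T => s |: T) (fun T => T :\ s)) /=; last first.
  by move=> T /andP[_ sT]; rewrite setD1K.
rewrite (eq_bigl (fun T : {set I} => (T \subset S) && (s \notin T))); last first.
  move=> T; rewrite subUset sub1set sS setU11 andbT.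
  case sT: (s \in T); last by rewrite setU1K ?sT ?eqxx.
  rewrite /= andbF; case: eqP => [h|]; last by rewrite andbF.
  by move: sT; rewrite -h setD11.
rewrite -big_split /= big1 // => T /andP[_ sT].
by rewrite cardsU1 sT add1n exprS mulN1r addNr.
Qed.

(* The default [~~ z] makes positions past the end of [w] count as non-[z]. *)
Definition occ (z : bool) (w : seq bool) (i : nat) : bool := nth (~~ z) w i == z.

Definition pcount (z : bool) (w : seq bool) (j : nat) : nat := count (occ z w) (iota 0 j).

Section PrefixCount.
Variables (z : bool) (w : seq bool).

Lemma pcountS j : pcount z w j.+1 = pcount z w j + occ z w j.
Proof. by rewrite /pcount -addn1 iotaD count_cat /= add0n addn0. Qed.

Lemma occ_oversize i : size w <= i -> occ z w i = false.
Proof. by move=> hi; rewrite /occ nth_default //; case: z. Qed.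

Lemma occN i : i < size w -> occ (~~ z) w i = ~~ occ z w i.
Proof.
move=> hi; rewrite /occ negbK (set_nth_default (~~ z) z hi).
by case: z; case: (nth _ w i).
Qed.

Lemma pcount_le j : pcount z w j <= j.
Proof. by rewrite -{2}(size_iota 0 j) count_size. Qed.

Lemma pcount_oversize j : size w <= j -> pcount z w j = pcount z w (size w).
Proof.
move=> hj; rewrite /pcount -(subnKC hj) iotaD count_cat add0n.
rewrite [X in _ + X](@eq_in_count _ _ pred0) ?count_pred0 ?addn0 // => i.
by rewrite mem_iota => /andP[hi _]; rewrite occ_oversize.
Qed.

Lemma pcountN j : j <= size w -> pcount (~~ z) w j = j - pcount z w j.
Proof.
move=> hj; rewrite -[X in X - _](size_iota 0 j) -(count_predC (occ z w)) /pcount addKn.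
apply: eq_in_count => i; rewrite mem_iota => /andP[_ hi].
by rewrite /= occN //; apply: leq_trans hj.
Qed.

Lemma count_pred1_pcount : count (pred1 z) w = pcount z w (size w).
Proof.
rewrite -{1}(mkseq_nth (~~ z) w) /mkseq count_map /pcount.
by apply: eq_count => i; rewrite /= /occ.
Qed.

End PrefixCount.

Lemma all2_leq_count (p q : seq nat) :
  sorted ltn p -> sorted ltn q -> size p = size q ->
  all2 leq p q <-> (forall j, count (fun x => x < j) q <= count (fun x => x < j) p).
Proof.
elim: p q => [|a p IH] [|b q] //= sp sq [eqs].
have [sp' sq'] := (path_sorted sp, path_sorted sq).
have /allP ap := order_path_min ltn_trans sp.
have /allP aq := order_path_min ltn_trans sq.
have count_lt0 (r : seq nat) c j : {in r, forall x, c < x} -> j <= c.+1 ->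
    count (fun x => x < j) r = 0.
  move=> hr hj; apply/eqP; rewrite -leqn0 leqNgt -has_count; apply/hasPn => x /hr.
  by rewrite -leqNgt; apply: leq_trans.
split.
  case/andP=> ab /(IH _ sp' sq' eqs) H j.
  by have := H j; case: (ltnP b j) => bj; case: (ltnP a j) => aj //=; lia.
move=> H; have ab : a <= b.
  rewrite leqNgt; apply/negP=> ba; have := H b.+1.
  rewrite /= ltnSn ltnS (leqNgt a b) ba (count_lt0 p a) //; last exact: ltnW.
rewrite ab /=; apply/(IH _ sp' sq' eqs) => j.
case: (ltnP b j) => bj; last by rewrite (count_lt0 q b) // leqW.
by have := H j; rewrite /= bj (leq_ltn_trans ab bj).
Qed.

Section Words.
Variable n : nat.

Lemma count_lt_xpos (w : word n) j : count (fun p => p < j) (xpos w) = pcount lx w j.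
Proof.
have sw : size w = n by rewrite size_tuple.
rewrite /xpos count_filter.
have [jn|nj] := leqP j n.
  rewrite -[in iota 0 n](subnKC jn) iotaD count_cat add0n.
  rewrite [X in _ + X](@eq_in_count _ _ pred0) ?count_pred0 ?addn0; last first.
    by move=> i; rewrite mem_iota => /andP[hi _]; rewrite /= ltnNge hi.
  by apply: eq_in_count => i; rewrite mem_iota => /andP[_ hi]; rewrite /= hi.
rewrite pcount_oversize sw ?(ltnW nj) //; apply: eq_in_count => i.
by rewrite mem_iota => /andP[_ hi]; rewrite /= (ltn_trans hi nj).
Qed.

Lemma sorted_xpos (w : word n) : sorted ltn (xpos w).
Proof. exact/sorted_filter/iota_ltn_sorted/ltn_trans. Qed.

Lemma size_xpos (w : word n) : size (xpos w) = pcount lx w n.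
Proof. by rewrite size_filter. Qed.

Definition dominates (z : bool) (a c : word n) : bool :=
  [forall j : 'I_n.+1, pcount z c j <= pcount z a j].

Lemma dominatesP z (a c : word n) :
  reflect (forall j, pcount z c j <= pcount z a j) (dominates z a c).
Proof.
apply: (iffP forallP) => [H j|H j //].
have [jn|nj] := leqP j n; first exact: (H (Ordinal (jn : j < n.+1))).
rewrite !pcount_oversize ?size_tuple ?(ltnW nj) //.
exact: (H ord_max).
Qed.

Lemma dominatesN z (a c : word n) : dominates (~~ z) c a = dominates z a c.
Proof.
apply: eq_forallb => j; have jn : j <= n by rewrite -ltnS.
rewrite !pcountN ?size_tuple //.
by have := pcount_le z a j; have := pcount_le z c j; lia.
Qed.

Lemma leW_dominates (a c : word n) :
  pcount lx a n = pcount lx c n -> leW a c = dominates lx a c.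
Proof.
move=> eq_n; apply/idP/dominatesP.
  by move/all2_leq_count=> H j; rewrite -!count_lt_xpos H ?sorted_xpos ?size_xpos.
move=> H; apply/all2_leq_count; rewrite ?sorted_xpos ?size_xpos // => j.
by rewrite !count_lt_xpos.
Qed.

Definition Eswap (z : bool) (w : word n) : {set 'I_n} :=
  [set i : 'I_n | [&& i.+1 < n, occ (~~ z) w i & occ z w i.+1]].

Lemma Ey_Eswap (w : word n) : Ey w = Eswap lx w.
Proof. by apply/setP => i; rewrite !inE andbAC andbC. Qed.

Lemma Ex_Eswap (w : word n) : Ex w = Eswap ly w.
Proof. by apply/setP => i; rewrite !inE andbAC andbC. Qed.

Definition pair_left (T : {set 'I_n}) (j : nat) : bool := [exists i in T, j == i :> nat].
Definition pair_right (T : {set 'I_n}) (j : nat) : bool := [exists i in T, j == i.+1].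

Lemma occ_swapT z b T (w : word n) j : j < n ->
  occ z (swapT b T w) j =
  if pair_left T j then b == z else if pair_right T j then ~~ b == z else occ z w j.
Proof.
move=> jn; rewrite /occ -[j]/(nat_of_ord (Ordinal jn)) -!tnth_nth tnth_mktuple.
by rewrite /pair_left /pair_right; case: ifP => //; case: ifP.
Qed.

Section SwapPairs.
Variables (z : bool) (T : {set 'I_n}) (w : word n).
Hypothesis subT : T \subset Eswap z w.

Lemma pair_leftP j : pair_left T j -> [/\ j.+1 < n, occ z w j = false & occ z w j.+1].
Proof.
case/existsP=> i /andP[/(subsetP subT) + /eqP ->]; rewrite inE => /and3P[lt_in occ_i ->].
by split => //; apply/negbTE; rewrite -occN // size_tuple ltnW.
Qed.

Lemma pair_rightP j : pair_right T j -> j < n /\ occ z w j.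
Proof.
by case/existsP=> i /andP[/(subsetP subT) + /eqP ->]; rewrite inE => /and3P[].
Qed.

Lemma pcount_swapT j : pcount z (swapT z T w) j = pcount z w j + pair_right T j.
Proof.
elim: j => [|j IH].
  by have -> : pair_right T 0 = false by apply/negbTE/existsP => -[i /andP[]].
rewrite !pcountS IH (_ : pair_right T j.+1 = pair_left T j) //.
have [jn|nj] := ltnP j n; last first.
  have /negbTE-> : ~~ pair_left T j by apply/negP => /pair_leftP[]; lia.
  have /negbTE-> : ~~ pair_right T j by apply/negP => /pair_rightP[]; lia.
  by rewrite !occ_oversize ?size_tuple.
rewrite occ_swapT // eqxx.
case pl: (pair_left T j).
  have [_ -> _] := pair_leftP pl.
  have /negbTE-> : ~~ pair_right T j by apply/negP => /pair_rightP[_]; have [_ ->] := pair_leftP pl.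
  by rewrite addn0 addn1.
case pr: (pair_right T j); last by rewrite !addn0.
by have [_ ->] := pair_rightP pr; case: z.
Qed.

Lemma pcount_swapT_size z' : pcount z' (swapT z T w) n = pcount z' w n.
Proof.
have pcount_n : pcount z (swapT z T w) n = pcount z w n.
  by rewrite pcount_swapT; case: (boolP (pair_right T n)) => [/pair_rightP[]|_]; rewrite ?ltnn ?addn0.
have [->//|neq] := eqVneq z' z.
have -> : z' = ~~ z by move: neq; case: z; case: z'.
by rewrite !pcountN ?size_tuple // pcount_n.
Qed.

End SwapPairs.

Definition gap_pairs (z : bool) (a b : word n) : {set 'I_n} :=
  [set t in Eswap z b | pcount z b t.+1 < pcount z a t.+1].

Lemma gap_pairs_neq0 z (a b : word n) j :
  pcount z a n = pcount z b n -> j <= n -> pcount z b j < pcount z a j ->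
  gap_pairs z a b != set0.
Proof.
move=> eq_n jn gap_j.
have from_occ k : k < n -> occ z b k -> pcount z b k < pcount z a k ->
    gap_pairs z a b != set0.
  elim: k => [//|k IH] kn occ_k1 gap_k1.
  case occ_k: (occ z b k).
    apply: (IH (ltnW kn) occ_k).
    by move: gap_k1; rewrite !pcountS occ_k; case: (occ z a k); lia.
  apply/set0Pn; exists (Ordinal (ltnW kn)).
  by rewrite !inE /= kn occ_k1 gap_k1 occN ?occ_k // size_tuple; apply: ltnW.
have to_occ m k : k + m = n -> pcount z b k < pcount z a k -> gap_pairs z a b != set0.
  elim: m k => [|m IH] k km gap_k; first by move: gap_k; rewrite addn0 in km; rewrite km eq_n ltnn.
  case occ_k: (occ z b k); first by apply: from_occ occ_k gap_k; lia.
  by apply: (IH k.+1); [lia | move: gap_k; rewrite !pcountS occ_k; lia].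
exact: (to_occ (n - j) j (subnKC jn)).
Qed.

Lemma eq_pcount_word z (a b : word n) :
  (forall j, j <= n -> pcount z a j = pcount z b j) -> a = b.
Proof.
move=> H; apply/val_inj/(@eq_from_nth _ (~~ z)); rewrite !size_tuple // => i lt_in.
have : occ z a i = occ z b i.
  by have := H i.+1 lt_in; rewrite !pcountS H 1?ltnW //; case: (occ z a i); case: (occ z b i); lia.
by rewrite /occ; case: (nth _ a i); case: (nth _ b i); case: z {H}.
Qed.

Lemma dominates_gap_pairs z (a b : word n) : pcount z a n = pcount z b n ->
  dominates z a b && (gap_pairs z a b == set0) = (a == b).
Proof.
move=> eq_n; apply/idP/eqP => [/andP[/dominatesP dom /eqP gap0]|<-].
  apply: (eq_pcount_word (z := z)) => j jn; apply/eqP; rewrite eq_sym eqn_leq dom /=.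
  by rewrite leqNgt; apply: contraFN (gap_pairs_neq0 eq_n jn) _; rewrite gap0 eqxx.
apply/andP; split; first exact/dominatesP.
by apply/eqP/setP => t; rewrite !inE ltnn andbF.
Qed.

Lemma dominates_swapT z (a b : word n) (T : {set 'I_n}) : T \subset Eswap z b ->
  dominates z a (swapT z T b) = dominates z a b && (T \subset gap_pairs z a b).
Proof.
move=> subT; apply/dominatesP/andP => [H|[/dominatesP dom /subsetP Tgap] j].
  split; first by apply/dominatesP => j; have := H j; rewrite pcount_swapT //; lia.
  apply/subsetP => t tT; rewrite inE (subsetP subT t tT) /=.
  have right_t : pair_right T t.+1 by apply/existsP; exists t; rewrite tT eqxx.
  by have := H t.+1; rewrite pcount_swapT // right_t addn1.
rewrite pcount_swapT //; case: (boolP (pair_right T j)) => [|_]; last by rewrite addn0.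
by case/existsP=> t /andP[/Tgap + /eqP ->]; rewrite inE addn1 => /andP[].
Qed.

Lemma sum_sign_dominates_swapT (R : pzRingType) z (a b : word n) :
  pcount z a n = pcount z b n ->
  (\sum_(T : {set 'I_n} | T \subset Eswap z b)
     (-1 : R) ^+ #|T| * (dominates z a (swapT z T b))%:R = (a == b)%:R)%R.
Proof.
move=> eq_n; rewrite -(dominates_gap_pairs eq_n).
have gapE : gap_pairs z a b \subset Eswap z b by apply/subsetP => t; rewrite inE => /andP[].
transitivity (\sum_(T : {set 'I_n} | T \subset gap_pairs z a b) (-1 : R) ^+ #|T| * (dominates z a b)%:R)%R.
  rewrite big_mkcond [RHS]big_mkcond; apply: eq_bigr => T _.
  have [Tgap|Tgap] := boolP (T \subset gap_pairs z a b).
    have TE : T \subset Eswap z b := subset_trans Tgap gapE.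
    by rewrite TE dominates_swapT // Tgap andbT.
  have [TE|//] := boolP (T \subset Eswap z b).
  by rewrite dominates_swapT // (negbTE Tgap) andbF mulr0.
by rewrite -big_distrl /= sum_subset_sign -natrM mulnb andbC.
Qed.

End Words.

Section KernelDuality.
Variables (R : comPzRingType) (I : finType).
Local Notation V := {ffun I -> R}.
Implicit Types (u v : V) (K : I -> I -> R).
Local Open Scope ring_scope.

Definition dotv u v : R := \sum_i u i * v i.
Definition formv K u v : R := \sum_i \sum_j u i * v j * K i j.
Definition kerv K v : V := [ffun i => \sum_j K i j * v j].
Definition unitv (j : I) : V := [ffun i => (i == j)%:R].

Lemma dotvC u v : dotv u v = dotv v u.
Proof. by apply: eq_bigr => i _; rewrite mulrC. Qed.

Lemma dotv_unitv j v : dotv (unitv j) v = v j.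
Proof.
rewrite /dotv (bigD1 j) //= ffunE eqxx mul1r big1 ?addr0 // => i ij.
by rewrite ffunE (negbTE ij) mul0r.
Qed.

Lemma formvE K u v : formv K u v = dotv u (kerv K v).
Proof.
apply: eq_bigr => i _; rewrite ffunE big_distrr; apply: eq_bigr => j _.
by rewrite mulrAC -mulrA.
Qed.

Lemma formv_tr K u v : formv K u v = formv (fun i j => K j i) v u.
Proof.
rewrite /formv exchange_big; apply: eq_bigr => j _; apply: eq_bigr => i _.
by rewrite (mulrC (u i)).
Qed.

Lemma kerv_unitv K j : kerv K (unitv j) = [ffun i => K i j].
Proof.
apply/ffunP => i; rewrite !ffunE (bigD1 j) //= ffunE eqxx mulr1 big1 ?addr0 // => k kj.
by rewrite ffunE (negbTE kj) mulr0.
Qed.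

Lemma kerv_linear K a u v :
  kerv K ([ffun i => a * u i] + v) = [ffun i => a * kerv K u i] + kerv K v.
Proof.
apply/ffunP => i; rewrite !ffunE big_distrr -big_split /=.
by apply: eq_bigr => j _; rewrite !ffunE mulrDr mulrCA.
Qed.

Lemma kerv_inv K K' : (forall i k, \sum_j K i j * K' j k = (i == k)%:R) ->
  cancel (kerv K') (kerv K).
Proof.
move=> KK' v; apply/ffunP => i; rewrite ffunE.
under eq_bigr do rewrite ffunE big_distrr.
rewrite exchange_big /= -(dotv_unitv i v) dotvC.
by apply: eq_bigr => k _; rewrite ffunE eq_sym -KK' (mulrC (v k)) big_distrl; apply: eq_bigr => j _; rewrite mulrA.
Qed.

Section DualInverse.
Variables (K P Q : I -> I -> R).
Hypothesis KP : forall a b, \sum_c K a c * P c b = (a == b)%:R.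
Hypothesis KtQ : forall a b, \sum_c K c a * Q c b = (a == b)%:R.

Lemma kerv_inj : injective (kerv K).
Proof.
apply: (can_inj (g := kerv (fun a c => Q c a))); apply: kerv_inv => a b.
by rewrite eq_sym -KtQ; apply: eq_bigr => c _; rewrite mulrC.
Qed.

Lemma dual_form_kerv u v : dotv u v = formv K u (kerv P v).
Proof. by rewrite formvE (kerv_inv KP). Qed.

Lemma dual_form_inverse (F : V -> V) :
  (forall u v, dotv u v = formv K u (F v)) ->
  [/\ F =1 kerv P, cancel F (kerv K) & cancel (kerv K) F].
Proof.
move=> HF; have FK : cancel F (kerv K).
  by move=> v; apply/ffunP => i; rewrite -dotv_unitv -formvE -HF dotv_unitv.
have FP : F =1 kerv P by move=> v; apply: kerv_inj; rewrite FK (kerv_inv KP).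
by split=> // v; apply: kerv_inj; rewrite FK.
Qed.

End DualInverse.
End KernelDuality.

Arguments unitv {R I} j.

Section ZetaInverse.
Variables (n : nat) (e : int).
Local Notation M := (Mne n e).
Local Open Scope ring_scope.

Lemma inM_pcount (w : word n) :
  inM e w = ((pcount ly w n)%:Z - (pcount lx w n)%:Z == e).
Proof. by rewrite /inM !count_pred1_pcount size_tuple. Qed.

Lemma pcount_Mne z (a b : M) : pcount z (val a) n = pcount z (val b) n.
Proof.
have pcount_y (w : word n) : pcount ly w n = (n - pcount lx w n)%N.
  by rewrite -(pcountN lx) ?size_tuple.
have lx_eq : pcount lx (val a) n = pcount lx (val b) n.
  have := valP a; have := valP b; rewrite !inM_pcount !pcount_y.
  have := pcount_le lx (val a) n; have := pcount_le lx (val b) n.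
  set x := pcount lx _ n; set y := pcount lx _ n => yn xn /eqP hy /eqP hx.
  have : (n - x)%N%:Z - x%:Z = (n - y)%N%:Z - y%:Z :> int by rewrite hx hy.
  by lia.
by case: z; rewrite ?pcount_y lx_eq.
Qed.

Lemma inM_swapT z (T : {set 'I_n}) (w : word n) :
  T \subset Eswap z w -> inM e (swapT z T w) = inM e w.
Proof. by move=> subT; rewrite !inM_pcount !pcount_swapT_size. Qed.

Definition zeta (a b : M) : rat := (leW (val a) (val b))%:R.

Definition psi_alt z (c b : M) : rat :=
  \sum_(T : {set 'I_n} | T \subset Eswap z (val b)) (-1) ^+ #|T| * (val c == swapT z T (val b))%:R.

Lemma sum_psi_alt z (F : word n -> rat) (b : M) :
  \sum_(c : M) F (val c) * psi_alt z c b =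
  \sum_(T : {set 'I_n} | T \subset Eswap z (val b)) (-1) ^+ #|T| * F (swapT z T (val b)).
Proof.
under eq_bigr do rewrite big_distrr; rewrite exchange_big /=; apply: eq_bigr => T subT.
have swapM : inM e (swapT z T (val b)) by rewrite inM_swapT ?(valP b).
pose s : M := Sub _ swapM.
rewrite (bigD1 s) //= eqxx mulr1 mulrC big1 ?addr0 // => c ne_c.
by rewrite -[swapT _ _ _]/(val s) val_eqE (negbTE ne_c) !mulr0.
Qed.

Lemma zeta_psi_alt_x (a b : M) : \sum_c zeta a c * psi_alt lx c b = (a == b)%:R.
Proof.
rewrite (sum_psi_alt lx (fun w => (leW (val a) w)%:R)) -val_eqE.
rewrite -(sum_sign_dominates_swapT _ (pcount_Mne lx a b)); apply: eq_bigr => T subT.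
by rewrite leW_dominates // pcount_swapT_size //; apply: pcount_Mne.
Qed.

Lemma zeta_psi_alt_y (a b : M) : \sum_c zeta c a * psi_alt ly c b = (a == b)%:R.
Proof.
rewrite (sum_psi_alt ly (fun w => (leW w (val a))%:R)) -val_eqE.
rewrite -(sum_sign_dominates_swapT _ (pcount_Mne ly a b)); apply: eq_bigr => T subT.
rewrite leW_dominates ?pcount_swapT_size //; last exact: pcount_Mne.
by rewrite -(dominatesN lx (swapT ly T (val b)) (val a)).
Qed.

Definition zeta_tr (a b : M) : rat := zeta b a.

Lemma is_linear_kerv (K : M -> M -> rat) : is_linear (kerv K).
Proof. by move=> a u v; rewrite kerv_linear. Qed.

Lemma dotf_bilf_tr (F : vec n e -> vec n e) :
  (forall u v, dotf u v = bilf (F u) v) <-> (forall u v, dotv u v = formv zeta_tr u (F v)).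
Proof.
split=> HF u v; first by rewrite dotvC formv_tr; apply: HF.
by rewrite -[dotf u v]/(dotv u v) dotvC HF formv_tr.
Qed.

Lemma Qplus_spec (F : vec n e -> vec n e) : (forall u v, dotf u v = bilf u (F v)) ->
  [/\ F =1 kerv (psi_alt lx), cancel F (kerv zeta) & cancel (kerv zeta) F].
Proof. exact: (dual_form_inverse zeta_psi_alt_x zeta_psi_alt_y). Qed.

Lemma Qminus_spec (F : vec n e -> vec n e) : (forall u v, dotf u v = bilf (F u) v) ->
  [/\ F =1 kerv (psi_alt ly), cancel F (kerv zeta_tr) & cancel (kerv zeta_tr) F].
Proof. by move/dotf_bilf_tr; apply: (dual_form_inverse zeta_psi_alt_y zeta_psi_alt_x). Qed.

Lemma Qplus_exists : forall u v, dotf u v = bilf u (kerv (psi_alt lx) v).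
Proof. exact: (dual_form_kerv zeta_psi_alt_x). Qed.

Lemma Qminus_exists : forall u v, dotf u v = bilf (kerv (psi_alt ly) u) v.
Proof. by apply/dotf_bilf_tr; apply: (dual_form_kerv zeta_psi_alt_y). Qed.

Lemma psi_alt_int z (c b : M) : psi_alt z c b \is a Num.int.
Proof. by apply: rpred_sum => T _; rewrite rpredM ?rpredX ?rpredN1 ?rpred_nat. Qed.

Lemma bvec_unitv (w : M) : bvec (val w) = unitv w.
Proof. by apply/ffunP => c; rewrite !ffunE val_eqE. Qed.

Lemma sum_bvec_pred (P : pred M) :
  \sum_(w | P w) bvec (val w) = [ffun c => (P c)%:R] :> vec n e.
Proof.
apply/ffunP => c; rewrite sum_ffunE ffunE big_mkcond (bigD1 c) //= big1 ?addr0.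
  by rewrite ffunE eqxx; case: (P c).
by move=> w wc; rewrite ffunE eq_sym val_eqE (negbTE wc); case: (P w).
Qed.

Lemma sum_sign_bvec_swapT z (w : M) :
  \sum_(T : {set 'I_n} | T \subset Eswap z (val w)) scv ((-1) ^+ #|T|) (bvec (swapT z T (val w)))
  = [ffun c => psi_alt z c w] :> vec n e.
Proof. by apply/ffunP => c; rewrite sum_ffunE ffunE; apply: eq_bigr => T _; rewrite !ffunE. Qed.

End ZetaInverse.

Local Open Scope ring_scope.

Theorem mainTheorem5 (n : nat) (e : int) :
  (exists (Qp Qm : vec n e -> vec n e), is_linear Qp /\ is_linear Qm /\
     (forall u v : vec n e, dotf u v = bilf u (Qp v) /\ dotf u v = bilf (Qm u) v))
  /\
  (forall (Qp Qm : vec n e -> vec n e),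
     is_linear Qp -> is_linear Qm ->
     (forall u v : vec n e, dotf u v = bilf u (Qp v)) ->
     (forall u v : vec n e, dotf u v = bilf (Qm u) v) ->
     (forall w : Mne n e,
        Qp (bvec (val w)) =
          \sum_(T : {set 'I_n} | T \subset Ey (val w))
             scv ((-1) ^+ #|T|) (bvec (psiy T (val w)) : vec n e)) /\
     (forall w : Mne n e,
        Qm (bvec (val w)) =
          \sum_(T : {set 'I_n} | T \subset Ex (val w))
             scv ((-1) ^+ #|T|) (bvec (psix T (val w)) : vec n e)) /\
     (exists Qpi : vec n e -> vec n e,
        is_linear Qpi /\ cancel Qp Qpi /\ cancel Qpi Qp /\
        forall w : Mne n e,
          Qpi (bvec (val w)) =
            \sum_(w' : Mne n e | leW (val w') (val w)) bvec (val w')) /\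
     (exists Qmi : vec n e -> vec n e,
        is_linear Qmi /\ cancel Qm Qmi /\ cancel Qmi Qm /\
        forall w : Mne n e,
          Qmi (bvec (val w)) =
            \sum_(w' : Mne n e | leW (val w) (val w')) bvec (val w')) /\
     (forall w w' : Mne n e,
        Qp (bvec (val w)) w' \is a Num.int /\
        Qm (bvec (val w)) w' \is a Num.int)).
Proof.
split.
  exists (kerv (psi_alt lx)), (kerv (psi_alt ly)).
  split; first exact: is_linear_kerv.
  split=> [|u v]; first exact: is_linear_kerv.
  by split; [apply: Qplus_exists | apply: Qminus_exists].
move=> Qp Qm _ _ /Qplus_spec[QpE QpK KQp] /Qminus_spec[QmE QmK KQm].
split; first by move=> w; rewrite Ey_Eswap sum_sign_bvec_swapT QpE bvec_unitv kerv_unitv.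
split; first by move=> w; rewrite Ex_Eswap sum_sign_bvec_swapT QmE bvec_unitv kerv_unitv.
split.
  exists (kerv (@zeta n e)); split; first exact: is_linear_kerv.
  by do 2!split=> //; move=> w; rewrite sum_bvec_pred bvec_unitv kerv_unitv.
split.
  exists (kerv (@zeta_tr n e)); split; first exact: is_linear_kerv.
  by do 2!split=> //; move=> w; rewrite sum_bvec_pred bvec_unitv kerv_unitv.
by move=> w c; rewrite QpE QmE bvec_unitv !kerv_unitv !ffunE !psi_alt_int.
Qed.
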